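(* For $\alpha>0$ let $\mathcal{C}_\alpha=X_\alpha(\mathbb{R}^2)$ be as in the context. Then the curve $\mathcal{C}_\alpha\cap\{x_2=0\}$ converges uniformly to the origin as $\alpha\to+\infty$: $$\sup\{|x_1|+|x_3| : (x_1,0,x_3)\in\mathcal{C}_\alpha\}\to0\quad\text{as }\alpha\to+\infty.$$
   Context: $\mathrm{Nil}_3$ is $\mathbb{R}^3$ with the metric $dx_1^2+dx_2^2+\big(dx_3+\tfrac12(x_2dx_1-x_1dx_2)\big)^2$. For $\alpha>0$ and $\theta\in\mathbb{R}$ set $C_{\alpha,\theta}=\frac{\sin(2\theta)}{2\alpha}$ and $P_{\alpha,\theta}(x)=\alpha^2+\cos(2\theta)x^2-C_{\alpha,\theta}^2x^4$. Let $\theta^+_\alpha=\pi/2$ if $\alpha>1$, and $\theta^+_\alpha=\frac12\arccos(1-2\alpha^2)$ if $\alpha\le1$. Let $$L(\alpha,\theta)=\int_{-1}^1\frac{2\alpha C_{\alpha,\theta}^2x^2-\alpha\cos(2\theta)+C_{\alpha,\theta}^2x^2\sqrt{P_{\alpha,\theta}(x)}}{\sqrt{(1-x^2)P_{\alpha,\theta}(x)}(\alpha+\sqrt{P_{\alpha,\theta}(x)})}dx.$$ Let $\theta=\tilde\theta_\alpha$ be the unique $\theta\in(0,\theta^+_\alpha)\cap(0,\pi/4)$ with $L(\alpha,\theta)=0$, and $C=C_{\alpha,\theta}$. Let $\varphi$ solve $\varphi'^2=P_{\alpha,\theta}(\cos\varphi)$ with $\varphi(0)=0$ and $\varphi'(0)\le0$.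 Define $\beta'=C\cos^2\varphi$ with $\beta(0)=0$, and $G'=\frac{C^2\cos^2\varphi-\cos 2\theta}{\alpha-\varphi'}$ with $G(0)=0$. Put $A=\alpha v+\beta(u)$ and $X_\alpha(u,v)=(x_1,x_2,x_3)$ with $x_1=\frac{G'}{\alpha}\cos\varphi\sinh A-\frac C\alpha\sin\varphi\cosh A$, $x_2=Cv-G$, $x_3=-\frac{x_1x_2}2+\frac C\alpha(\frac{G'}{\alpha}-1)\cos\varphi\cosh A-\frac1\alpha(\frac{C^2}\alpha+G')\sin\varphi\sinh A$, where $\varphi,G,G'$ are evaluated at $u$. *)

From Stdlib Require Import Reals.
From Coquelicot Require Import Coquelicot.
Open Scope R_scope.

Definition Cc (a t : R) : R := sin (2 * t) / (2 * a).

Definition Pp (a t x : R) : R :=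
  a ^ 2 + cos (2 * t) * x ^ 2 - (Cc a t) ^ 2 * x ^ 4.

Definition thetaPlus (a : R) : R :=
  if Rlt_dec 1 a then PI / 2 else acos (1 - 2 * a ^ 2) / 2.

Definition Lintegrand (a t x : R) : R :=
  (2 * a * (Cc a t) ^ 2 * x ^ 2 - a * cos (2 * t)
     + (Cc a t) ^ 2 * x ^ 2 * sqrt (Pp a t x))
  / (sqrt ((1 - x ^ 2) * Pp a t x) * (a + sqrt (Pp a t x))).

Definition L_vanishes (a t : R) : Prop :=
  is_RInt_gen (Lintegrand a t) (at_right (-1)) (at_left 1) 0.

Definition Gp (a t : R) (phi : R -> R) (u : R) : R :=
  ((Cc a t) ^ 2 * (cos (phi u)) ^ 2 - cos (2 * t)) / (a - Derive phi u).

Definition Aarg (a : R) (beta : R -> R) (u v : R) : R := a * v + beta u.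

Definition X1 (a t : R) (phi beta G : R -> R) (u v : R) : R :=
  Gp a t phi u / a * cos (phi u) * sinh (Aarg a beta u v)
  - Cc a t / a * sin (phi u) * cosh (Aarg a beta u v).

Definition X2 (a t : R) (G : R -> R) (u v : R) : R := Cc a t * v - G u.

Definition X3 (a t : R) (phi beta G : R -> R) (u v : R) : R :=
  - (X1 a t phi beta G u v * X2 a t G u v) / 2
  + Cc a t / a * (Gp a t phi u / a - 1) * cos (phi u) * cosh (Aarg a beta u v)
  - 1 / a * ((Cc a t) ^ 2 / a + Gp a t phi u) * sin (phi u) * sinh (Aarg a beta u v).

From Stdlib Require Import Reals Lra Psatz Classical.
From Coquelicot Require Import Coquelicot.
Open Scope R_scope.

(* Write t = theta_alpha and C = C_{alpha,t}.  The substitution x = cos y turns L(alpha, t)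
   into the integral over [0, PI] of a PI-periodic kernel k, so L = 0 makes the primitive
   K(y) = int_0^y k periodic, hence O(alpha^-3) uniformly in y.  The same vanishing forces
   k >= 0 somewhere, which gives alpha^2 cos 2t <= 1 and C ~ 1/(2 alpha).  Since phi' never
   vanishes it equals -sqrt P(cos phi), and then alpha G + C beta + K(phi) is a first
   integral of the profile.  On {x2 = 0} we have C v = G, so C A = -K(phi) and A = O(alpha^-2);
   with A bounded and G' = O(1/alpha), every term of x1 and x3 is O(1/alpha). *)

Lemma is_derive_neg_step (f : R -> R) (x l : R) :
  is_derive f x l -> l < 0 -> forall d, 0 < d -> exists h, 0 < h < d /\ f (x + h) < f x.
Proof.
  intros Hf Hl d Hd. apply is_derive_Reals in Hf.
  destruct (Hf (- l / 2)) as [del Hdel]; [lra|].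
  assert (Hdel0 := cond_pos del).
  set (h := Rmin d del / 2).
  assert (Hh : 0 < h /\ h < d /\ h < del).
  { unfold h. assert (Hm := Rmin_pos d del Hd Hdel0).
    assert (Rmin d del <= d) by apply Rmin_l. assert (Rmin d del <= del) by apply Rmin_r. lra. }
  exists h. split; [lra|].
  assert (Hq := Hdel h ltac:(lra) ltac:(rewrite Rabs_pos_eq; lra)).
  apply Rabs_lt_between in Hq.
  assert (Hneg : (f (x + h) - f x) / h < 0) by lra.
  assert (E : f (x + h) - f x = (f (x + h) - f x) / h * h) by (field; lra).
  nra.
Qed.

Lemma is_derive_reflect (f : R -> R) (x l : R) :
  is_derive f (- x) l -> is_derive (fun z => - f (- z)) x l.
Proof.
  intros Hf.
  assert (Hopp : is_derive Ropp x (-1)) by (auto_derive; auto; ring).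
  assert (H := is_derive_opp _ x _ (is_derive_comp f Ropp x _ _ Hf Hopp)).
  simpl in H. unfold scal, opp in H; simpl in H; unfold mult in H; simpl in H.
  now replace l with (- (-1 * l)) by ring.
Qed.

Lemma is_derive_pos_step (f : R -> R) (x l : R) :
  is_derive f x l -> 0 < l -> forall d, 0 < d -> exists h, 0 < h < d /\ f (x - h) < f x.
Proof.
  intros Hf Hl d Hd.
  assert (Hg : is_derive (fun z => - f (- z)) (- x) l)
    by (apply is_derive_reflect; now rewrite Ropp_involutive).
  destruct (is_derive_neg_step _ _ _ (is_derive_opp _ _ _ Hg) ltac:(unfold opp; simpl; lra) d Hd)
    as [h [Hh Hfh]].
  exists h. split; [exact Hh|].
  simpl in Hfh. rewrite !Ropp_involutive in Hfh.
  now replace (x - h) with (- (- x + h)) by ring.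
Qed.

Lemma derive_neg_propagates (f df : R -> R) :
  (forall x, is_derive f x (df x)) -> (forall x, df x <> 0) ->
  forall x y, x < y -> df x < 0 -> df y < 0.
Proof.
  intros Hf Hnz x y Hxy Hx.
  destruct (Rlt_or_le (df y) 0) as [Hy|Hy]; [exact Hy|exfalso].
  assert (Hy' : 0 < df y) by (destruct Hy as [|E]; [lra|exfalso; now apply (Hnz y)]).
  destruct (continuity_ab_min f x y) as [m [Hmin Hm]]; [lra| |].
  { intros c _. apply continuity_pt_filterlim, (ex_derive_continuous f).
    exists (df c). apply Hf. }
  destruct (is_derive_neg_step f x _ (Hf x) Hx (y - x)) as [h [Hh Hfh]]; [lra|].
  destruct (is_derive_pos_step f y _ (Hf y) Hy' (y - x)) as [h' [Hh' Hfh']]; [lra|].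
  assert (Hmx : x < m) by (destruct Hm as [[ | <-] _]; [lra|specialize (Hmin (x + h)); lra]).
  assert (Hmy : m < y) by (destruct Hm as [_ [ | ->]]; [lra|specialize (Hmin (y - h')); lra]).
  destruct (Rlt_or_le (df m) 0) as [Hn|Hn].
  - destruct (is_derive_neg_step f m _ (Hf m) Hn (y - m)) as [k [Hk Hfk]]; [lra|].
    specialize (Hmin (m + k)). lra.
  - assert (Hp : 0 < df m) by (destruct Hn as [|E]; [lra|exfalso; now apply (Hnz m)]).
    destruct (is_derive_pos_step f m _ (Hf m) Hp (m - x)) as [k [Hk Hfk]]; [lra|].
    specialize (Hmin (m - k)). lra.
Qed.

Lemma derive_neg_everywhere (f df : R -> R) :
  (forall x, is_derive f x (df x)) -> (forall x, df x <> 0) -> df 0 < 0 ->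
  forall x, df x < 0.
Proof.
  intros Hf Hnz H0 x.
  destruct (Rtotal_order 0 x) as [Hx|[<-|Hx]]; [|exact H0|].
  - exact (derive_neg_propagates f df Hf Hnz 0 x Hx H0).
  - assert (Hg : forall z, is_derive (fun z => - f (- z)) z (df (- z)))
      by (intros z; apply is_derive_reflect, Hf).
    assert (H := derive_neg_propagates _ (fun z => df (- z)) Hg
                   (fun z => Hnz (- z)) 0 (- x) ltac:(lra) ltac:(simpl; now rewrite Ropp_0)).
    simpl in H. now rewrite Ropp_involutive in H.
Qed.

Lemma is_derive_zero_const (f : R -> R) :
  (forall x, is_derive f x 0) -> forall x, f x = f 0.
Proof.
  intros Hf x.
  destruct (MVT_gen f 0 x (fun _ => 0)) as [c [_ Hc]].
  - intros y _. apply Hf.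
  - intros y _. apply continuity_pt_filterlim, (ex_derive_continuous f).
    exists 0. apply Hf.
  - lra.
Qed.

Lemma is_derive_RInt_continuous (k : R -> R) :
  (forall y, continuous k y) -> forall y, is_derive (RInt k 0) y (k y).
Proof.
  intros Hk y. apply (is_derive_RInt k (RInt k 0) 0 y); [|apply Hk].
  exists (mkposreal 1 Rlt_0_1). intros b _.
  apply (RInt_correct k), (ex_RInt_continuous k). intros; apply Hk.
Qed.

Lemma RInt_0_periodic (k : R -> R) (T : R) :
  (forall y, continuous k y) -> (forall y, k (y + T) = k y) -> RInt k 0 T = 0 ->
  forall y, RInt k 0 (y + T) = RInt k 0 y.
Proof.
  intros Hk Hper HT.
  assert (HD := is_derive_RInt_continuous k Hk).
  assert (Hd : forall x, is_derive (fun y => RInt k 0 (y + T) - RInt k 0 y) x 0).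
  { intros x.
    assert (Hs : is_derive (fun y => y + T) x 1) by (auto_derive; auto).
    assert (H := is_derive_minus _ _ x _ _ (is_derive_comp _ _ x _ _ (HD (x + T)) Hs) (HD x)).
    simpl in H. unfold scal, minus, plus, opp in H; simpl in H; unfold mult in H.
    now rewrite Hper, Rmult_1_l, Rplus_opp_r in H. }
  intros y. assert (E := is_derive_zero_const _ Hd y). simpl in E.
  rewrite Rplus_0_l, HT, RInt_point in E. unfold zero in E; simpl in E. lra.
Qed.

Lemma periodic_bounded (f : R -> R) (T B : R) :
  0 < T -> (forall y, f (y + T) = f y) ->
  (forall y, 0 <= y <= T -> Rabs (f y) <= B) -> forall y, Rabs (f y) <= B.
Proof.
  intros HT Hper Hb.
  assert (Hn : forall n : nat, forall y, - INR n * T <= y <= (INR n + 1) * T -> Rabs (f y) <= B).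
  { induction n as [|n IH]; intros y Hy.
    - simpl in Hy. apply Hb. lra.
    - rewrite S_INR in Hy. assert (0 <= INR n) by apply pos_INR.
      destruct (Rlt_or_le ((INR n + 1) * T) y) as [H1|H1].
      + replace y with ((y - T) + T) by ring. rewrite Hper. apply IH. nra.
      + destruct (Rlt_or_le y (- INR n * T)) as [H2|H2].
        * rewrite <- Hper. apply IH. nra.
        * apply IH. lra. }
  intros y. destruct (INR_archimed T (Rabs y) HT) as [n Hy].
  apply (Hn n). assert (H1 := Rle_abs y). assert (H2 := Rle_abs (- y)).
  rewrite Rabs_Ropp in H2. split; nra.
Qed.

Lemma filterlim_acos_m1 : filterlim acos (at_right (-1)) (locally PI).
Proof.
  intros P [eps HP]. assert (Hpi := PI_RGT_0).
  set (e := Rmin (eps / 2) (PI / 2)).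
  assert (He : 0 < e <= eps / 2 /\ e <= PI / 2).
  { unfold e. assert (H := cond_pos eps).
    split; [split|]; [apply Rmin_pos; lra|apply Rmin_l|apply Rmin_r]. }
  assert (Hce : -1 < cos (PI - e) < 1).
  { rewrite <- cos_PI at 1. rewrite <- cos_0.
    split; apply cos_decreasing_1; lra. }
  exists (mkposreal (1 + cos (PI - e)) ltac:(lra)). simpl. intros x Hx Hx1.
  unfold ball in Hx; simpl in Hx; unfold AbsRing_ball, abs, minus, plus, opp in Hx; simpl in Hx.
  apply Rabs_lt_between in Hx.
  assert (Hxc : x < cos (PI - e)) by lra.
  assert (Hacos := acos_bound_lt x ltac:(lra)).
  assert (Hgt : PI - e < acos x).
  { destruct (Rlt_or_le (PI - e) (acos x)) as [|Hle]; [assumption|exfalso].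
    assert (Hcos : cos (PI - e) <= cos (acos x)).
    { destruct Hle as [Hlt| ->]; [left; apply cos_decreasing_1; lra|lra]. }
    rewrite cos_acos in Hcos; lra. }
  apply HP. unfold ball; simpl; unfold AbsRing_ball, abs, minus, plus, opp; simpl.
  rewrite Rabs_left1; lra.
Qed.

Lemma filterlim_acos_1 : filterlim acos (at_left 1) (locally 0).
Proof.
  apply (filterlim_ext (fun x => PI - acos (- x))).
  { intros x. rewrite acos_opp. ring. }
  replace 0 with (PI - PI) by ring.
  apply (filterlim_comp _ _ _ (fun x => acos (- x)) (fun z => PI - z) _ (locally PI)).
  - apply (filterlim_comp _ _ _ Ropp acos _ (at_right (-1))); [|apply filterlim_acos_m1].
    replace (-1) with (- 1) by ring. apply filterlim_Ropp_left.
  - apply (continuous_minus (fun _ => PI) (fun z => z));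
      [apply continuous_const|apply continuous_id].
Qed.

Definition Lnumerator (a t x : R) : R :=
  2 * a * (Cc a t) ^ 2 * x ^ 2 - a * cos (2 * t) + (Cc a t) ^ 2 * x ^ 2 * sqrt (Pp a t x).

(* On (0, PI), [Lkernel a t y = Lintegrand a t (cos y) * sin y]: the integrand of L after
   the substitution x = cos y. *)
Definition Lkernel (a t y : R) : R :=
  Lnumerator a t (cos y) / ((a + sqrt (Pp a t (cos y))) * sqrt (Pp a t (cos y))).

Lemma Pp_opp (a t x : R) : Pp a t (- x) = Pp a t x.
Proof. unfold Pp. ring. Qed.

Lemma Lkernel_shift_PI (a t y : R) : Lkernel a t (y + PI) = Lkernel a t y.
Proof.
  unfold Lkernel, Lnumerator. rewrite neg_cos, Pp_opp. f_equal. ring.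
Qed.

Lemma Cc_sq_bound (a t : R) : 0 < a -> 4 * a ^ 2 * Cc a t ^ 2 <= 1.
Proof.
  intros Ha. assert (Hs := SIN_bound (2 * t)). unfold Cc.
  replace (4 * a ^ 2 * (sin (2 * t) / (2 * a)) ^ 2) with (sin (2 * t) ^ 2) by (field; lra).
  nra.
Qed.

Lemma Pp_bounds (a t x : R) : 2 <= a -> -1 <= x <= 1 ->
  (a - 1) ^ 2 <= Pp a t x <= (a + 1) ^ 2.
Proof.
  intros Ha Hx. assert (HC := Cc_sq_bound a t ltac:(lra)).
  assert (Hc := COS_bound (2 * t)). unfold Pp.
  assert (Hx2 : 0 <= x ^ 2 <= 1) by nra.
  assert (HCx : 0 <= Cc a t ^ 2 * x ^ 4 <= 1 / 16).
  { replace (x ^ 4) with (x ^ 2 * x ^ 2) by ring.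
    assert (H0 : 0 <= Cc a t ^ 2) by apply pow2_ge_0.
    assert (H4 : 4 <= a ^ 2) by nra.
    assert (H16 : 16 * Cc a t ^ 2 <= 1) by nra.
    assert (Hx4 : 0 <= x ^ 2 * x ^ 2 <= 1) by (split; nra).
    split; [now apply Rmult_le_pos|].
    apply Rle_trans with (Cc a t ^ 2 * 1); [apply Rmult_le_compat_l|]; lra. }
  split; nra.
Qed.

Lemma sqrt_Pp_bounds (a t x : R) : 2 <= a -> -1 <= x <= 1 ->
  a - 1 <= sqrt (Pp a t x) <= a + 1.
Proof.
  intros Ha Hx. destruct (Pp_bounds a t x Ha Hx) as [Hl Hu].
  rewrite <- (sqrt_pow2 (a - 1)), <- (sqrt_pow2 (a + 1)) by lra.
  split; apply sqrt_le_1_alt; lra.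
Qed.

Lemma continuous_Lkernel (a t y : R) : 2 <= a -> continuous (Lkernel a t) y.
Proof.
  intros Ha. apply (ex_derive_continuous (Lkernel a t)).
  assert (HP := Pp_bounds a t (cos y) Ha (COS_bound y)).
  assert (HS := sqrt_Pp_bounds a t (cos y) Ha (COS_bound y)).
  assert (HdP : ex_derive (Pp a t) (cos y)) by (unfold Pp; auto_derive; auto).
  unfold Lkernel, Lnumerator. auto_derive.
  repeat split; auto; nra.
Qed.

Lemma continuous_Lintegrand (a t x : R) : 2 <= a -> -1 < x < 1 ->
  continuous (Lintegrand a t) x.
Proof.
  intros Ha Hx. apply (ex_derive_continuous (Lintegrand a t)).
  assert (HP := Pp_bounds a t x Ha ltac:(lra)).
  assert (HS := sqrt_Pp_bounds a t x Ha ltac:(lra)).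
  assert (Hq : 0 < (1 - x ^ 2) * Pp a t x) by (apply Rmult_lt_0_compat; nra).
  assert (Hsq := sqrt_lt_R0 _ Hq).
  assert (HdP : ex_derive (Pp a t) x) by (unfold Pp; auto_derive; auto).
  unfold Lintegrand. auto_derive.
  replace (1 + - (x * (x * 1))) with (1 - x ^ 2) by ring.
  repeat split; auto; nra.
Qed.

Lemma Lkernel_acos (a t x : R) : 2 <= a -> -1 < x < 1 ->
  Lkernel a t (acos x) = Lintegrand a t x * sqrt (1 - x ^ 2).
Proof.
  intros Ha Hx.
  assert (HS := sqrt_Pp_bounds a t x Ha ltac:(lra)).
  assert (Hsx : 0 < sqrt (1 - x ^ 2)) by (apply sqrt_lt_R0; nra).
  unfold Lkernel, Lintegrand, Lnumerator.
  rewrite cos_acos, sqrt_mult_alt by nra. field. repeat split; lra.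
Qed.

Lemma is_derive_acos (x : R) : -1 < x < 1 -> is_derive acos x (- / sqrt (1 - x ^ 2)).
Proof.
  intros Hx. apply is_derive_Reals, (derive_pt_eq_1 _ _ _ (derivable_pt_acos x Hx)).
  rewrite derive_pt_acos. replace (x²) with (x ^ 2) by (unfold Rsqr; ring).
  unfold Rdiv. ring.
Qed.

Lemma is_derive_Lkernel_primitive_acos (a t x : R) : 2 <= a -> -1 < x < 1 ->
  is_derive (fun z => - RInt (Lkernel a t) 0 (acos z)) x (Lintegrand a t x).
Proof.
  intros Ha Hx.
  assert (HK := is_derive_RInt_continuous _ (fun y => continuous_Lkernel a t y Ha) (acos x)).
  assert (H := is_derive_opp _ _ _ (is_derive_comp _ _ x _ _ HK (is_derive_acos x Hx))).
  simpl in H. unfold scal, opp in H; simpl in H; unfold mult in H; simpl in H.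
  replace (Lintegrand a t x) with (- (- / sqrt (1 - x ^ 2) * Lkernel a t (acos x))); [exact H|].
  assert (Hsx : 0 < sqrt (1 - x ^ 2)) by (apply sqrt_lt_R0; nra).
  rewrite Lkernel_acos by assumption. field. lra.
Qed.

Lemma continuous_opp_RInt_Lkernel (a t y : R) : 2 <= a ->
  continuous (fun z => - RInt (Lkernel a t) 0 z) y.
Proof.
  intros Ha. apply (continuous_opp (RInt (Lkernel a t) 0)), ex_derive_continuous.
  eexists. apply is_derive_RInt_continuous. intros z. now apply continuous_Lkernel.
Qed.

Lemma eventually_segment_in_open_unit :
  filter_prod (at_right (-1)) (at_left 1) (fun ab =>
    forall x, Rmin (fst ab) (snd ab) <= x <= Rmax (fst ab) (snd ab) -> -1 < x < 1).
Proof.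
  apply (Filter_prod _ _ _ (fun z => -1 < z < 1) (fun z => -1 < z < 1)).
  - exists (mkposreal 2 ltac:(lra)). intros z Hz Hz1.
    unfold ball in Hz; simpl in Hz; unfold AbsRing_ball, abs, minus, plus, opp in Hz; simpl in Hz.
    apply Rabs_lt_between in Hz. lra.
  - exists (mkposreal 2 ltac:(lra)). intros z Hz Hz1.
    unfold ball in Hz; simpl in Hz; unfold AbsRing_ball, abs, minus, plus, opp in Hz; simpl in Hz.
    apply Rabs_lt_between in Hz. lra.
  - intros u w Hu Hw x [H1 H2]. simpl in H1, H2. split.
    + apply Rlt_le_trans with (2 := H1). apply Rmin_glb_lt; lra.
    + apply Rle_lt_trans with (1 := H2). apply Rmax_lub_lt; lra.
Qed.

Lemma is_RInt_gen_Lintegrand (a t : R) : 2 <= a ->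
  is_RInt_gen (Lintegrand a t) (at_right (-1)) (at_left 1) (RInt (Lkernel a t) 0 PI).
Proof.
  intros Ha.
  set (F := fun z => - RInt (Lkernel a t) 0 (acos z)).
  assert (HF : forall x, -1 < x < 1 -> is_derive F x (Lintegrand a t x))
    by (intros; now apply is_derive_Lkernel_primitive_acos).
  assert (Hin := eventually_segment_in_open_unit).
  apply (is_RInt_gen_ext (Derive F)).
  { revert Hin. apply filter_imp. intros ab Hab x Hx.
    apply is_derive_unique, HF, Hab. lra. }
  replace (RInt (Lkernel a t) 0 PI)
    with (- RInt (Lkernel a t) 0 0 - - RInt (Lkernel a t) 0 PI)
    by (rewrite RInt_point; unfold zero; simpl; ring).
  apply is_RInt_gen_Derive.
  - revert Hin. apply filter_imp. intros ab Hab x Hx. eexists. now apply HF, Hab.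
  - revert Hin. apply filter_imp. intros ab Hab x Hx.
    destruct (Hab x Hx) as [Hl Hr].
    apply (continuous_ext_loc _ (Lintegrand a t)).
    + apply (filter_imp (fun y => -1 < y /\ y < 1)).
      * intros y Hy. symmetry. now apply is_derive_unique, HF.
      * apply (open_and _ _ (open_gt (-1)) (open_lt 1) x). lra.
    + now apply continuous_Lintegrand.
  - apply (filterlim_comp _ _ _ acos (fun z => - RInt (Lkernel a t) 0 z) _ (locally PI)).
    + exact filterlim_acos_m1.
    + now apply continuous_opp_RInt_Lkernel.
  - apply (filterlim_comp _ _ _ acos (fun z => - RInt (Lkernel a t) 0 z) _ (locally 0)).
    + exact filterlim_acos_1.
    + now apply continuous_opp_RInt_Lkernel.
Qed.

Lemma L_vanishes_RInt_Lkernel (a t : R) : 2 <= a -> L_vanishes a t ->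
  RInt (Lkernel a t) 0 PI = 0.
Proof.
  intros Ha HL.
  now rewrite <- (is_RInt_gen_unique _ _ (is_RInt_gen_Lintegrand a t Ha)),
              (is_RInt_gen_unique _ _ HL).
Qed.

Lemma RInt_eq_0_nonneg_point (f : R -> R) (a b : R) : a < b ->
  (forall x, a <= x <= b -> continuous f x) -> RInt f a b = 0 ->
  exists x, a < x < b /\ 0 <= f x.
Proof.
  intros Hab Hf H0. apply NNPP. intros Hno.
  assert (Hlt : RInt f a b < RInt (fun _ => 0) a b).
  { apply RInt_lt; [exact Hab|intros; apply continuous_const|exact Hf|].
    intros x Hx. apply Rnot_le_lt. intros Hfx. apply Hno. now exists x. }
  rewrite RInt_const, H0 in Hlt. unfold scal in Hlt; simpl in Hlt; unfold mult in Hlt; simpl in Hlt.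
  lra.
Qed.

Lemma Lnumerator_upper (a t x : R) : 2 <= a -> -1 <= x <= 1 ->
  Lnumerator a t x <= 4 * a * Cc a t ^ 2 - a * cos (2 * t).
Proof.
  intros Ha Hx. assert (HS := sqrt_Pp_bounds a t x Ha Hx).
  assert (Hx2 : 0 <= x ^ 2 <= 1) by nra.
  assert (HC : 0 <= Cc a t ^ 2) by apply pow2_ge_0.
  unfold Lnumerator.
  assert (H : x ^ 2 * (2 * a + sqrt (Pp a t x)) <= 4 * a) by nra.
  nra.
Qed.

Lemma a2_cos_2t_le_1 (a t : R) : 2 <= a -> RInt (Lkernel a t) 0 PI = 0 ->
  a ^ 2 * cos (2 * t) <= 1.
Proof.
  intros Ha H0.
  destruct (RInt_eq_0_nonneg_point (Lkernel a t) 0 PI PI_RGT_0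
              (fun y _ => continuous_Lkernel a t y Ha) H0) as [y [_ Hy]].
  assert (HS := sqrt_Pp_bounds a t (cos y) Ha (COS_bound y)).
  assert (HN : 0 <= Lnumerator a t (cos y)).
  { unfold Lkernel in Hy.
    apply Rmult_le_reg_r with (/ ((a + sqrt (Pp a t (cos y))) * sqrt (Pp a t (cos y)))).
    - apply Rinv_0_lt_compat, Rmult_lt_0_compat; lra.
    - now rewrite Rmult_0_l. }
  assert (HU := Lnumerator_upper a t (cos y) Ha (COS_bound y)).
  assert (HC := Cc_sq_bound a t ltac:(lra)).
  nra.
Qed.

Lemma Lkernel_bound (a t y : R) : 2 <= a -> 0 <= cos (2 * t) -> a ^ 2 * cos (2 * t) <= 1 ->
  Rabs (Lkernel a t y) <= 2 / a ^ 3.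
Proof.
  intros Ha Hc0 Hc.
  assert (HS := sqrt_Pp_bounds a t (cos y) Ha (COS_bound y)).
  assert (HU := Lnumerator_upper a t (cos y) Ha (COS_bound y)).
  assert (HC := Cc_sq_bound a t ltac:(lra)).
  set (S := sqrt (Pp a t (cos y))) in *.
  assert (HN : Rabs (Lnumerator a t (cos y)) <= / a).
  { assert (HL : - a * cos (2 * t) <= Lnumerator a t (cos y)).
    { unfold Lnumerator. fold S.
      assert (0 <= Cc a t ^ 2 * cos y ^ 2) by (apply Rmult_le_pos; apply pow2_ge_0).
      nra. }
    assert (Hia : a * / a = 1) by (field; lra).
    assert (0 < / a) by (apply Rinv_0_lt_compat; lra).
    apply Rabs_le_between. split; nra. }
  assert (Hden : a ^ 2 / 2 <= (a + S) * S) by nra.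
  unfold Lkernel. fold S. unfold Rdiv. rewrite Rabs_mult, Rabs_inv, (Rabs_pos_eq ((a + S) * S)) by nra.
  replace (2 * / a ^ 3) with (/ a * / (a ^ 2 / 2)) by (field; lra).
  apply Rmult_le_compat; [apply Rabs_pos|left; apply Rinv_0_lt_compat; nra|exact HN|].
  apply Rinv_le_contravar; nra.
Qed.

Lemma RInt_Lkernel_bound (a t y : R) : 2 <= a -> 0 <= cos (2 * t) ->
  RInt (Lkernel a t) 0 PI = 0 -> Rabs (RInt (Lkernel a t) 0 y) <= 2 * PI / a ^ 3.
Proof.
  intros Ha Hc0 H0.
  assert (Hc := a2_cos_2t_le_1 a t Ha H0).
  assert (Hk := fun z => continuous_Lkernel a t z Ha).
  assert (HPI := PI_RGT_0).
  revert y. apply (periodic_bounded _ PI); [exact HPI| |].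
  - intros y. apply RInt_0_periodic; [exact Hk|apply Lkernel_shift_PI|exact H0].
  - intros y Hy. eapply Rle_trans.
    + apply abs_RInt_le_const; [lra|apply (ex_RInt_continuous (Lkernel a t)); intros; apply Hk|].
      intros z _. now apply Lkernel_bound.
    + replace (2 * PI / a ^ 3) with (PI * (2 / a ^ 3)) by (field; lra).
      apply Rmult_le_compat_r; [|lra].
      apply Rlt_le, Rdiv_lt_0_compat; [lra|apply pow_lt; lra].
Qed.

Lemma Derive_phi_eq (a t : R) (phi : R -> R) : 2 <= a -> Derive phi 0 <= 0 ->
  (forall u, ex_derive phi u /\ Derive phi u ^ 2 = Pp a t (cos (phi u))) ->
  forall u, Derive phi u = - sqrt (Pp a t (cos (phi u))).
Proof.
  intros Ha H0 Hphi.
  assert (Hsq : forall u, (a - 1) ^ 2 <= Derive phi u ^ 2).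
  { intros u. rewrite (proj2 (Hphi u)). apply Pp_bounds, COS_bound. exact Ha. }
  assert (Hnz : forall u, Derive phi u <> 0).
  { intros u Hu. specialize (Hsq u). rewrite Hu in Hsq. nra. }
  assert (Hneg : forall u, Derive phi u < 0).
  { apply (derive_neg_everywhere phi); [intros u; apply Derive_correct, Hphi|exact Hnz|].
    destruct H0 as [|E]; [assumption|exfalso; now apply (Hnz 0)]. }
  intros u. rewrite <- (proj2 (Hphi u)), <- (Rsqr_pow2 (Derive phi u)), sqrt_Rsqr_abs.
  rewrite Rabs_left by apply Hneg. ring.
Qed.

Lemma first_integral (a t : R) (phi beta G : R -> R) : 2 <= a ->
  phi 0 = 0 -> beta 0 = 0 -> G 0 = 0 ->
  (forall u, ex_derive phi u) ->
  (forall u, Derive phi u = - sqrt (Pp a t (cos (phi u)))) ->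
  (forall u, is_derive beta u (Cc a t * cos (phi u) ^ 2)) ->
  (forall u, is_derive G u (Gp a t phi u)) ->
  forall u, a * G u + Cc a t * beta u + RInt (Lkernel a t) 0 (phi u) = 0.
Proof.
  intros Ha Hp0 Hb0 HG0 Hpd Hphi' Hbd HGd.
  assert (HK := is_derive_RInt_continuous _ (fun y => continuous_Lkernel a t y Ha)).
  assert (Hd : forall u, is_derive
     (fun u => a * G u + Cc a t * beta u + RInt (Lkernel a t) 0 (phi u)) u 0).
  { intros u.
    assert (H := is_derive_plus _ _ u _ _
                   (is_derive_plus _ _ u _ _ (is_derive_scal _ u a _ (HGd u))
                      (is_derive_scal _ u (Cc a t) _ (Hbd u)))
                   (is_derive_comp _ _ u _ _ (HK (phi u)) (Derive_correct _ _ (Hpd u)))).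
    simpl in H. unfold scal, plus in H; simpl in H; unfold mult in H; simpl in H.
    assert (HS := sqrt_Pp_bounds a t (cos (phi u)) Ha (COS_bound _)).
    match type of H with is_derive _ _ ?l => replace l with 0 in H; [exact H|] end.
    unfold Gp, Lkernel, Lnumerator. rewrite Hphi'. field. split; lra. }
  intros u. rewrite (is_derive_zero_const _ Hd u), Hp0, Hb0, HG0, RInt_point.
  unfold zero; simpl. ring.
Qed.

Lemma Cc_bounds (a t : R) : 8 <= a -> 0 < t < PI / 4 -> a ^ 2 * cos (2 * t) <= 1 ->
  1 <= 4 * a * Cc a t /\ 2 * a * Cc a t <= 1.
Proof.
  intros Ha Ht Hc. assert (HPI4 := PI_4).
  assert (Hs : 0 < sin (2 * t)) by (apply sin_gt_0; lra).
  assert (Hc0 : 0 < cos (2 * t)) by (apply cos_gt_0; lra).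
  assert (Hs1 := SIN_bound (2 * t)).
  assert (Hs2 : 1 / 2 <= sin (2 * t)).
  { assert (H := sin2_cos2 (2 * t)). unfold Rsqr in H.
    assert (Ha2 : 64 <= a ^ 2) by nra.
    assert (Hc64 : cos (2 * t) <= 1 / 64) by nra.
    nra. }
  unfold Cc. replace (4 * a * (sin (2 * t) / (2 * a))) with (2 * sin (2 * t)) by (field; lra).
  replace (2 * a * (sin (2 * t) / (2 * a))) with (sin (2 * t)) by (field; lra).
  lra.
Qed.

Lemma Gp_bound (a t : R) (phi : R -> R) (u : R) : 2 <= a ->
  0 <= cos (2 * t) <= 1 -> Cc a t ^ 2 <= 1 ->
  Derive phi u = - sqrt (Pp a t (cos (phi u))) -> Rabs (Gp a t phi u) <= / a.
Proof.
  intros Ha Hc HC Hphi'. unfold Gp. rewrite Hphi'.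
  assert (HS := sqrt_Pp_bounds a t (cos (phi u)) Ha (COS_bound _)).
  assert (Hx : 0 <= cos (phi u) ^ 2 <= 1) by (assert (H := COS_bound (phi u)); split; nra).
  unfold Rdiv. rewrite Rabs_mult, Rabs_inv, (Rabs_pos_eq (a - _)) by lra.
  rewrite <- (Rmult_1_l (/ a)).
  apply Rmult_le_compat; [apply Rabs_pos|left; apply Rinv_0_lt_compat; lra| |].
  - apply Rabs_le_between. assert (0 <= Cc a t ^ 2) by apply pow2_ge_0. split; nra.
  - apply Rinv_le_contravar; lra.
Qed.

Lemma zero_section_Aarg_bound (a C v b g K : R) : 8 <= a -> 1 <= 4 * a * C ->
  a * g + C * b + K = 0 -> C * v - g = 0 -> Rabs K <= 2 * PI / a ^ 3 ->
  Rabs (a * v + b) <= 1.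
Proof.
  intros Ha HC HI Hv HK. assert (HPI4 := PI_4).
  assert (HCA : C * (a * v + b) = - K).
  { replace (C * (a * v + b)) with (a * (C * v) + C * b) by ring.
    replace (C * v) with g by lra. lra. }
  assert (H4a : Rabs (a * v + b) <= 4 * a * Rabs (C * (a * v + b))).
  { rewrite Rabs_mult, (Rabs_pos_eq C) by nra.
    assert (H := Rabs_pos (a * v + b)). nra. }
  rewrite HCA, Rabs_Ropp in H4a.
  assert (E : 4 * a * (2 * PI / a ^ 3) = 8 * PI / a ^ 2) by (field; lra).
  assert (H8 : 8 * PI / a ^ 2 <= 1) by (apply Rle_div_l; nra).
  nra.
Qed.

Lemma Rabs_mult_le (x y X Y : R) : Rabs x <= X -> Rabs y <= Y -> Rabs (x * y) <= X * Y.
Proof.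
  intros Hx Hy. rewrite Rabs_mult. apply Rmult_le_compat; auto; apply Rabs_pos.
Qed.

Lemma Rabs_minus_le (x y : R) : Rabs (x - y) <= Rabs x + Rabs y.
Proof. rewrite <- (Rabs_Ropp y). apply Rabs_triang. Qed.

Lemma Rabs_cosh_sinh_le_3 (A : R) : Rabs A <= 1 -> Rabs (cosh A) <= 3 /\ Rabs (sinh A) <= 3.
Proof.
  intros HA. apply Rabs_le_between in HA.
  assert (Hexp : forall x, x <= 1 -> exp x <= 3).
  { intros x Hx. apply Rle_trans with (2 := exp_le_3).
    destruct Hx as [Hx| ->]; [left; now apply exp_increasing|lra]. }
  assert (H1 := Hexp A ltac:(lra)). assert (H2 := Hexp (- A) ltac:(lra)).
  assert (P1 := exp_pos A). assert (P2 := exp_pos (- A)).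
  unfold cosh, sinh. split; apply Rabs_le_between; split; lra.
Qed.

Lemma zero_section_bound (a C g y A : R) :
  8 <= a -> 0 <= C -> 2 * a * C <= 1 -> Rabs g <= / a -> Rabs A <= 1 ->
  Rabs (g / a * cos y * sinh A - C / a * sin y * cosh A)
  + Rabs (C / a * (g / a - 1) * cos y * cosh A - 1 / a * (C ^ 2 / a + g) * sin y * sinh A)
  <= 14 / a.
Proof.
  intros Ha HC0 HC Hg HA.
  destruct (Rabs_cosh_sinh_le_3 A HA) as [Hch Hsh].
  assert (Hcos : Rabs (cos y) <= 1) by (apply Rabs_le_between, COS_bound).
  assert (Hsin : Rabs (sin y) <= 1) by (apply Rabs_le_between, SIN_bound).
  set (ia := / a) in *.
  assert (Hia : 0 < ia <= 1 / 8).
  { unfold ia. split; [apply Rinv_0_lt_compat; lra|].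
    rewrite <- (Rmult_1_l (/ a)). apply Rmult_le_compat_l, Rinv_le_contravar; lra. }
  assert (Hia' : Rabs ia <= ia) by (rewrite Rabs_pos_eq; lra).
  assert (HCa : Rabs C <= ia / 2).
  { rewrite Rabs_pos_eq by lra. unfold ia.
    apply (Rmult_le_reg_l (2 * a)); [lra|]. field_simplify; lra. }
  assert (Hga : Rabs (g * ia - 1) <= ia * ia + 1).
  { eapply Rle_trans; [apply Rabs_minus_le|]. rewrite Rabs_R1.
    apply Rplus_le_compat_r, Rabs_mult_le; assumption. }
  assert (HC2g : Rabs (C ^ 2 * ia + g) <= ia / 2 * (ia / 2) * ia + ia).
  { eapply Rle_trans; [apply Rabs_triang|]. apply Rplus_le_compat; [|exact Hg].
    rewrite <- Rsqr_pow2. apply Rabs_mult_le; [|assumption].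
    unfold Rsqr. now apply Rabs_mult_le. }
  unfold Rdiv. rewrite Rmult_1_l. fold ia.
  assert (T1 := Rabs_mult_le _ _ _ _ (Rabs_mult_le _ _ _ _ (Rabs_mult_le _ _ _ _ Hg Hia') Hcos) Hsh).
  assert (T2 := Rabs_mult_le _ _ _ _ (Rabs_mult_le _ _ _ _ (Rabs_mult_le _ _ _ _ HCa Hia') Hsin) Hch).
  assert (T3 := Rabs_mult_le _ _ _ _ (Rabs_mult_le _ _ _ _
                  (Rabs_mult_le _ _ _ _ (Rabs_mult_le _ _ _ _ HCa Hia') Hga) Hcos) Hch).
  assert (T4 := Rabs_mult_le _ _ _ _ (Rabs_mult_le _ _ _ _ (Rabs_mult_le _ _ _ _ Hia' HC2g) Hsin) Hsh).
  assert (B1 := Rabs_minus_le (g * ia * cos y * sinh A) (C * ia * sin y * cosh A)).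
  assert (B2 := Rabs_minus_le (C * ia * (g * ia - 1) * cos y * cosh A)
                                (ia * (C ^ 2 * ia + g) * sin y * sinh A)).
  assert (Hsum : ia * ia * 1 * 3 + ia / 2 * ia * 1 * 3 + ia / 2 * ia * (ia * ia + 1) * 1 * 3
                 + ia * (ia / 2 * (ia / 2) * ia + ia) * 1 * 3 <= 14 * ia).
  { assert (ia * ia <= ia / 8) by nra. assert (ia * ia * ia <= ia / 64) by nra.
    assert (ia * ia * ia * ia <= ia / 512) by nra. nra. }
  lra.
Qed.

Theorem lemma6p2 (theta : R -> R) (phi beta G : R -> R -> R) :
  (forall a, 0 < a ->
     0 < theta a /\ theta a < thetaPlus a /\ theta a < PI / 4 /\
     L_vanishes a (theta a)) ->
  (forall a, 0 < a ->
     phi a 0 = 0 /\ Derive (phi a) 0 <= 0 /\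
     forall u, ex_derive (phi a) u /\
               (Derive (phi a) u) ^ 2 = Pp a (theta a) (cos (phi a u))) ->
  (forall a, 0 < a ->
     beta a 0 = 0 /\
     forall u, is_derive (beta a) u (Cc a (theta a) * (cos (phi a u)) ^ 2)) ->
  (forall a, 0 < a ->
     G a 0 = 0 /\
     forall u, is_derive (G a) u (Gp a (theta a) (phi a) u)) ->
  forall eps, 0 < eps -> exists M, forall a, M < a ->
    forall u v, X2 a (theta a) (G a) u v = 0 ->
      Rabs (X1 a (theta a) (phi a) (beta a) (G a) u v)
      + Rabs (X3 a (theta a) (phi a) (beta a) (G a) u v) <= eps.
Proof.
  intros Htheta Hphi Hbeta HG eps Heps.
  exists (Rmax 8 (14 / eps)). intros a Ha u v Hx2.
  assert (Ha8 : 8 <= a) by (apply Rlt_le, Rle_lt_trans with (2 := Ha), Rmax_l).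
  assert (Haeps : 14 / a <= eps).
  { assert (H := Rle_lt_trans _ _ _ (Rmax_r 8 (14 / eps)) Ha).
    apply Rlt_div_l in H; [|lra]. apply Rle_div_l; lra. }
  destruct (Htheta a ltac:(lra)) as [Ht0 [_ [Ht1 HL]]].
  destruct (Hphi a ltac:(lra)) as [Hp0 [Hd0 Hpd]].
  destruct (Hbeta a ltac:(lra)) as [Hb0 Hbd].
  destruct (HG a ltac:(lra)) as [HG0 HGd].
  set (t := theta a) in *.
  assert (HK0 := L_vanishes_RInt_Lkernel a t ltac:(lra) HL).
  assert (Hc : 0 < cos (2 * t)) by (assert (HPI4 := PI_4); apply cos_gt_0; lra).
  assert (Hc1 := a2_cos_2t_le_1 a t ltac:(lra) HK0).
  destruct (Cc_bounds a t Ha8 ltac:(lra) Hc1) as [HCl HCu].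
  assert (Hphi' := Derive_phi_eq a t (phi a) ltac:(lra) Hd0 Hpd).
  assert (HC0 : 0 < Cc a t) by nra.
  assert (HA : Rabs (Aarg a (beta a) u v) <= 1).
  { apply (zero_section_Aarg_bound a (Cc a t) v (beta a u) (G a u)
             (RInt (Lkernel a t) 0 (phi a u))); try assumption.
    - exact (first_integral a t (phi a) (beta a) (G a) ltac:(lra) Hp0 Hb0 HG0
               (fun u => proj1 (Hpd u)) Hphi' Hbd HGd u).
    - now apply RInt_Lkernel_bound; lra. }
  assert (Hg := Gp_bound a t (phi a) u ltac:(lra)
                 (conj (Rlt_le _ _ Hc) (proj2 (COS_bound _))) ltac:(nra) (Hphi' u)).
  unfold X1, X3. rewrite Hx2, Rmult_0_r, Ropp_0, Rdiv_0_l, Rplus_0_l.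
  eapply Rle_trans; [|exact Haeps].
  apply zero_section_bound; assumption || lra.
Qed.
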